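(* For all integers $n \ge 8$ and $d \ge 6$, \[ \binom{d-1}{2} + d\binom{n-d}{2} \le \binom{d-1}{2}\,\mathcal{F}_{P_n}. \]
   Context: $\mathcal{F}_{P_m}$ is the number of minimal forts of the path on $m$ vertices; equivalently $\mathcal{F}_{P_m}=a_m$ where $a_1=a_2=a_3=1$ and $a_m = a_{m-2}+a_{m-3}$ for $m \ge 4$. (A fort is a nonempty vertex set such that every vertex outside it has zero or at least two neighbors in it; minimal means no proper subset is a fort.) Binomial coefficients $\binom{j}{2}$ with $j<2$ are $0$. *)

From mathcomp Require Import all_boot.
Set Implicit Arguments. Unset Strict Implicit. Unset Printing Implicit Defensive.

(* FPath m = number of minimal forts of the path P_m, given (per the paper's
   context) by a_1 = a_2 = a_3 = 1 and a_m = a_(m-2) + a_(m-3) for m >= 4.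
   The value at m = 0 is irrelevant (set to 0). *)
Fixpoint FPath (m : nat) : nat :=
  match m with
  | 0 => 0
  | 1 => 1
  | 2 => 1
  | 3 => 1
  | S (S ((S ((S k) as y)) as x)) => FPath x + FPath y
  end.

Lemma FPath_rec m : 4 <= m -> FPath m = FPath (m - 2) + FPath (m - 3).
Proof. by case: m => [|[|[|[|k]]]] //= _; rewrite !subn0. Qed.

(* Since 5 d <= 3 C(d-1,2) for d >= 6 and C(n-d,2) <= C(n-6,2), it suffices that
   F(n) - 1 >= (3/5) C(n-6,2) for n >= 8.  This quadratic lower bound follows by
   strong induction from F(n) = F(n-2) + F(n-3), because
   C(m-2,2) + C(m-3,2) - C(m,2) = (m-2)(m-9)/2 >= 0 for m >= 9; the cases
   8 <= n <= 14 are checked by computation. *)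
From mathcomp Require Import all_boot.
From mathcomp Require Import zify.

Set Implicit Arguments.
Unset Strict Implicit.
Unset Printing Implicit Defensive.

Lemma bin2_mul2 n : 'C(n, 2) * 2 = n * n.-1.
Proof. by rewrite mulnC -mul_bin_diag bin1. Qed.

Lemma leq_bin2_add_pred m : 9 <= m -> 'C(m, 2) <= 'C(m - 2, 2) + 'C(m - 3, 2).
Proof.
move=> m_ge9; rewrite -(leq_pmul2r (_ : 0 < 2)) // mulnDl !bin2_mul2; nia.
Qed.

Lemma FPath_bin2_lower n : 8 <= n -> 3 * 'C(n - 6, 2) + 5 <= 5 * FPath n.
Proof.
elim/ltn_ind: n => n IH n_ge8.
have [n_small | n_big] := leqP n 14.
  by clear IH; move: n_ge8 n_small; do 15 (case: n => [|n] //).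
have F2 := IH (n - 2) ltac:(lia) ltac:(lia).
have F3 := IH (n - 3) ltac:(lia) ltac:(lia).
have Crec := @leq_bin2_add_pred (n - 6) ltac:(lia).
rewrite subnAC in F2; rewrite subnAC in F3.
rewrite FPath_rec; last lia.
lia.
Qed.

Lemma leq_mul5_bin2_pred d : 6 <= d -> 5 * d <= 3 * 'C(d - 1, 2).
Proof.
move=> d_ge6; have := bin2_mul2 (d - 1); nia.
Qed.

Theorem mainTheorem18 (n d : nat) (hn : 8 <= n) (hd : 6 <= d) :
  'C(d - 1, 2) + d * 'C(n - d, 2) <= 'C(d - 1, 2) * FPath n.
Proof.
set c := 'C(d - 1, 2).
have hF := FPath_bin2_lower hn.
have hc := leq_mul5_bin2_pred hd.
have hC : 'C(n - d, 2) <= 'C(n - 6, 2) by apply: leq_bin2l; lia.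
have hdC : 5 * d * 'C(n - d, 2) <= 3 * c * 'C(n - 6, 2) := leq_mul hc hC.
have hcF : c * (3 * 'C(n - 6, 2) + 5) <= c * (5 * FPath n) := leq_mul (leqnn c) hF.
rewrite -(leq_pmul2l (_ : 0 < 5)) //; nia.
Qed.
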